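(* Let $m \geq 0$, $n \geq 1$ be integers. For a sorted configuration $c = (c^t; c^b)$ on $K_{m,n}^0$, let $k = (k_1,\ldots,k_n)$ with $k_j := |\{ i \in \{1,\ldots,m\} : c^t_i < j\}|$, and define $\Psi(c) := \big(F(k), F(c^b)\big)$. Then $\Psi$ is a bijection from the set of sorted stochastically recurrent configurations on $K_{m,n}^0$ to the set of compatible pairs $(F, F')$ with $F \in \mathrm{Ferrers}_{m,n}$ and $F' \in \mathrm{Ferrers}_{\leq m, n}$. Moreover, for such $c$, $\mathrm{level}(c) = \mathrm{Area}(F(c^b)) - \mathrm{Area}(F(k))$, and this is also the number of $\mathsf{Add}$ operations in any sequence of legal $\mathsf{Shift}$ and $\mathsf{Add}$ operations transforming $F(k)$ into $F(c^b)$.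
   Context: $K_{m,n}^0$ is the complete bipartite graph with ''top'' vertices $v^t_0, v^t_1, \ldots, v^t_m$ and ''bottom'' vertices $v^b_1, \ldots, v^b_n$, with an edge between every top vertex and every bottom vertex; $v^t_0$ is the sink. A configuration is a vector $c = (c^t_1, \ldots, c^t_m; c^b_1, \ldots, c^b_n)$ of non-negative integers ($c^*_i$ = number of grains at $v^*_i$); it is sorted if $c^t$ and $c^b$ are both weakly increasing. $c$ is stable if $c^t_i < n$ for all $i$ and $c^b_j < m+1$ for all $j$. Stochastic sandpile model (SSM) with a fixed parameter $p \in (0,1)$: an unstable vertex topples as follows: for each of its neighbours (for a bottom vertex this includes the sink), independently (and independently of all previous topplings), with probability $p$ it sends one grain to that neighbour, and otherwise keeps it; grains sent to the sink disappear. Repeated toppling from any configuration reaches a random stable configuration whose law does not depend on toppling order. In the Markov chain on stable configurations which at each step adds a grain to a uniformly random non-sink vertex and stabilises by the SSM, a stable configuration is stochastically recurrent if it is a recurrent state (appears infinitely often). The level is $\mathrm{level}(c) := \sum_i c^t_i + \sum_j c^b_j - mn$. A Ferrers diagram with $n$ rows is a left-aligned collection of cells in $n$ rows (ordered bottom to top, rows may be empty) whose row lengths are weakly increasing from bottom to top; for a weakly increasing $s = (s_1,\ldots,s_n)$ of non-negative integers, $F(s)$ is the Ferrers diagram with $s_i$ cells in row $i$. Its number of columns is $s_n$. $\mathrm{Ferrers}_{m,n}$ (resp. $\mathrm{Ferrers}_{\leq m,n}$) is the set of Ferrers diagrams with $n$ rows and exactly $m$ (resp. at most $m$) columns. $\mathrm{Area}(F)$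 is the number of cells. Operations on $F(s)$: $\mathsf{Shift}$ moves one cell from a row $p$ to a row $p' < p$ (i.e. $s_p \mapsto s_p - 1$, $s_{p'} \mapsto s_{p'} + 1$); $\mathsf{Add}$ adds a cell at the right of a row $p$ ($s_p \mapsto s_p + 1$). An operation is legal if the result is again a Ferrers diagram (the number of columns may change). An ordered pair $(F, F')$ is compatible if $F'$ can be obtained from $F$ by a finite sequence of legal $\mathsf{Shift}$ and $\mathsf{Add}$ operations. *)

From mathcomp Require Import all_boot all_order all_algebra.
Set Implicit Arguments. Unset Strict Implicit. Unset Printing Implicit Defensive.
Import GRing.Theory Num.Theory.

Inductive star (T : Type) (R : T -> T -> Prop) : T -> T -> Prop :=
| star_refl x : star R x x
| star_step x y z : R x y -> star R y z -> star R x z.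

(* Top non-sink vertex v^t_{i+1} is indexed by i : 'I_m,
   bottom vertex v^b_{j+1} by j : 'I_n; the sink v^t_0 is implicit. *)
Definition config (m n : nat) := ({ffun 'I_m -> nat} * {ffun 'I_n -> nat})%type.

Definition add_on (k : nat) (f : {ffun 'I_k -> nat}) (A : {set 'I_k}) :
  {ffun 'I_k -> nat} := [ffun x => f x + (x \in A)].

Definition sub_at (k : nat) (f : {ffun 'I_k -> nat}) (x0 : 'I_k) (d : nat) :
  {ffun 'I_k -> nat} := [ffun x => if x == x0 then f x - d else f x].

Definition sorted_config m n (c : config m n) : Prop :=
  (forall i j : 'I_m, (i <= j)%N -> (c.1 i <= c.1 j)%N) /\
  (forall i j : 'I_n, (i <= j)%N -> (c.2 i <= c.2 j)%N).

Definition stable m n (c : config m n) : Prop :=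
  (forall i : 'I_m, c.1 i < n)%N /\ (forall j : 'I_n, c.2 j < m.+1)%N.

(* One stochastic toppling with a possible outcome: an unstable vertex sends
   one grain to each neighbour of an arbitrary subset S of its neighbours
   (each such outcome has probability p^|S| (1-p)^(deg-|S|) > 0). For a
   bottom vertex, [b] says whether a grain is sent to the sink. *)
Inductive topple m n : config m n -> config m n -> Prop :=
| topple_top (c : config m n) (i : 'I_m) (S : {set 'I_n}) :
    (n <= c.1 i)%N ->
    topple c (sub_at c.1 i #|S|, add_on c.2 S)
| topple_bot (c : config m n) (j : 'I_n) (S : {set 'I_m}) (b : bool) :
    (m.+1 <= c.2 j)%N ->
    topple c (add_on c.1 S, sub_at c.2 j (#|S| + b)).

(* c' is a stable configuration obtained from c with positive probability *)
Definition stabilizes_to m n (c c' : config m n) : Prop :=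
  star (@topple m n) c c' /\ stable c'.

Definition add_top m n (c : config m n) (i : 'I_m) : config m n :=
  (add_on c.1 [set i], c.2).
Definition add_bot m n (c : config m n) (j : 'I_n) : config m n :=
  (c.1, add_on c.2 [set j]).

(* positive-probability transitions of the Markov chain on stable configs *)
Definition chain_step m n (c c' : config m n) : Prop :=
  stable c /\
  ((exists i : 'I_m, stabilizes_to (add_top c i) c') \/
   (exists j : 'I_n, stabilizes_to (add_bot c j) c')).

(* recurrent state of the (finite) Markov chain: every state reachable from c
   leads back to c *)
Definition stoch_recurrent m n (c : config m n) : Prop :=
  stable c /\ forall c', star (@chain_step m n) c c' -> star (@chain_step m n) c' c.

Definition level m n (c : config m n) : int :=
  ((\sum_(i < m) c.1 i + \sum_(j < n) c.2 j)%N)%:Z - (m * n)%N%:Z.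

(* F(s) is identified with its row-length vector s; row j+1 is s j. *)
Definition ferrers n (s : {ffun 'I_n -> nat}) : Prop :=
  forall i j : 'I_n, (i <= j)%N -> (s i <= s j)%N.

(* number of columns = length of top row s_n (= max row length) *)
Definition ncols n (s : {ffun 'I_n -> nat}) : nat := \max_(i < n) s i.

Definition area n (s : {ffun 'I_n -> nat}) : nat := \sum_(i < n) s i.

Inductive fop (n : nat) :=
| Shift of 'I_n & 'I_n   (* Shift p p' : move a cell from row p to row p' < p *)
| Add of 'I_n.           (* Add p : add a cell at the right of row p *)

Definition is_add n (o : fop n) : bool := if o is Add _ then true else false.

Inductive legal_op n : {ffun 'I_n -> nat} -> fop n -> {ffun 'I_n -> nat} -> Prop :=
| legal_shift (s : {ffun 'I_n -> nat}) (p p' : 'I_n) :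
    (p' < p)%N -> (0 < s p)%N ->
    ferrers (add_on (sub_at s p 1) [set p']) ->
    legal_op s (Shift p p') (add_on (sub_at s p 1) [set p'])
| legal_add (s : {ffun 'I_n -> nat}) (p : 'I_n) :
    ferrers (add_on s [set p]) ->
    legal_op s (Add p) (add_on s [set p]).

Inductive op_seq n : {ffun 'I_n -> nat} -> seq (fop n) -> {ffun 'I_n -> nat} -> Prop :=
| op_seq_nil s : op_seq s [::] s
| op_seq_cons s o s1 os s2 : legal_op s o s1 -> op_seq s1 os s2 -> op_seq s (o :: os) s2.

Definition compatible n (F F' : {ffun 'I_n -> nat}) : Prop :=
  exists os, op_seq F os F'.

Definition kvec m n (c : config m n) : {ffun 'I_n -> nat} :=
  [ffun j : 'I_n => #|[set i : 'I_m | (c.1 i < j.+1)%N]|].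

Definition Psi m n (c : config m n) : {ffun 'I_n -> nat} * {ffun 'I_n -> nat} :=
  (kvec c, c.2).

Definition compatible_target m n (P : {ffun 'I_n -> nat} * {ffun 'I_n -> nat}) : Prop :=
  [/\ ferrers P.1, ncols P.1 = m, ferrers P.2, (ncols P.2 <= m)%N & compatible P.1 P.2].

From mathcomp Require Import all_boot all_order all_algebra.
From mathcomp Require Import perm zify.
Import GRing.Theory Num.Theory.
Set Implicit Arguments. Unset Strict Implicit. Unset Printing Implicit Defensive.

(* A sorted stable configuration c is recurrent iff F(k) is dominated by F(c^b) in the
   prefix-sum order of rows.  Necessity: topplings and grain additions preserve
   |A| |B| <= (grains on A and B) for all sets A of top and B of bottom vertices; this holds
   for the maximal stable configuration, from which every recurrent configuration is
   reached.  With A = {i | c^t_i < t} and B the first t bottom vertices it becomes the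
   dominance inequality at t.  Dominance between Ferrers diagrams gives compatibility, since
   either an Add on the top row or a Shift of a cell down a maximal block where dominance is
   strict keeps dominance and shrinks the total gap between the prefix sums.
   Sufficiency: c is recurrent as soon as a family of top sets T_j with |T_j| >= m - c^b_j
   covers each top vertex i at most c^t_i times.  Indeed every stable configuration reaches
   the one with empty tops and full bottoms; toppling each bottom vertex j once onto T_j
   then leaves a configuration below c.  For F(k) the sets T_j = {i | j < c^t_i} work, and
   legal operations preserve the existence of such a family.  Finally k is the conjugate of
   c^t, so Area(F(k)) + sum c^t = m n, which gives the level; a Shift keeps the area and an
   Add increases it by one. *)

Lemma card_set_sum (T : finType) (P : pred T) : #|[set x | P x]| = \sum_x P x.
Proof. by rewrite -sum1dep_card big_mkcond; apply: eq_bigr => x _; case: (P x). Qed.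

Lemma card_set_ord_le k (A : {set 'I_k}) : #|A| <= k.
Proof. by rewrite -[X in _ <= X]card_ord max_card. Qed.

Lemma sum_ord_interval (n t x : nat) :
  \sum_(j < n) ((j < t) && (x <= j) : nat) = minn t n - x.
Proof.
elim: n => [|n IH]; first by rewrite big_ord0; lia.
by rewrite big_ord_recr /= IH; case: (ltnP n t) => ?; case: (leqP x n) => ? /=; lia.
Qed.

Lemma card_ord_lt n t : t <= n -> #|[set j : 'I_n | j < t]| = t.
Proof.
move=> tn; rewrite card_set_sum (eq_bigr (fun j : 'I_n => ((j < t) && (0 <= j) : nat))).
  by rewrite sum_ord_interval subn0; apply/minn_idPl.
by move=> j _; rewrite andbT.
Qed.

Lemma card_le_setI k (S B : {set 'I_k}) : #|S| <= #|B :&: S| + (k - #|B|).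
Proof.
have SB : #|S :\: B| <= #|~: B| by apply: subset_leq_card; rewrite setDE subsetIr.
by move: (cardsID B S) (cardsC B) SB; rewrite card_ord setIC; lia.
Qed.

Lemma sum_ord_lt_indicator n t x : t <= n ->
  \sum_(j < n | j < t) (x < j.+1 : nat) = t - x.
Proof.
move=> tn; rewrite big_mkcond /=.
rewrite (eq_bigr (fun j : 'I_n => ((j < t) && (x <= j) : nat))) => [|j _]; last by case: (j < t).
by rewrite sum_ord_interval; congr (_ - _); apply/minn_idPl.
Qed.

Lemma sum_ord_ltS n (P : pred 'I_n) (q : 'I_n) :
  \sum_(j < n) ((j < q.+1) && P j : nat) = \sum_(j < n) ((j < q) && P j : nat) + P q.
Proof.
rewrite (bigD1 q) // [X in _ = X + _](bigD1 q) //= ltnS leqnn ltnn add0n addnC; congr (_ + _).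
apply: eq_bigr => j jq; rewrite ltnS leq_eqVlt.
by case: (@eqP nat j q) jq => // /val_inj ->; rewrite eqxx.
Qed.

Lemma sum_add_on k (f : {ffun 'I_k -> nat}) (S : {set 'I_k}) (P : pred 'I_k) :
  \sum_(i | P i) add_on f S i = \sum_(i | P i) f i + #|[set i | P i & i \in S]|.
Proof.
rewrite card_set_sum big_mkcond [X in _ = X + _]big_mkcond [X in _ = _ + X]big_mkcond.
by rewrite -big_split /=; apply: eq_bigr => i _; rewrite ffunE; case: (P i); case: (i \in S).
Qed.

Lemma sum_sub_at k (f : {ffun 'I_k -> nat}) x d (P : pred 'I_k) : d <= f x ->
  \sum_(i | P i) sub_at f x d i + d * P x = \sum_(i | P i) f i.
Proof.
move=> dfx; case Px: (P x); last first.
  rewrite muln0 addn0; apply: eq_bigr => i Pi; rewrite ffunE.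
  by case: eqP => // ei; rewrite ei Px in Pi.
rewrite (bigD1 x) //= [RHS](bigD1 x) //= ffunE eqxx muln1 addnAC subnK //.
by congr (_ + _); apply: eq_bigr => i /andP [_ /negbTE xi]; rewrite ffunE xi.
Qed.

Lemma sum_add_on_set k (f : {ffun 'I_k -> nat}) (S A : {set 'I_k}) :
  \sum_(i in A) add_on f S i = \sum_(i in A) f i + #|A :&: S|.
Proof. by rewrite sum_add_on; congr (_ + _); apply: eq_card => i; rewrite !inE. Qed.

(** * Reachability in the Markov chain *)

Lemma star_trans T (R : T -> T -> Prop) x y z : star R x y -> star R y z -> star R x z.
Proof. by elim=> // a b c Rab _ IH /IH; apply: star_step. Qed.

Lemma star_inv T (R : T -> T -> Prop) (P : T -> Prop) x y :
  (forall a b, R a b -> P a -> P b) -> star R x y -> P x -> P y.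
Proof. by move=> RP; elim=> // a b c /RP Pab _ IH /Pab. Qed.

Lemma stable_chain_step m n (c d : config m n) : chain_step c d -> stable d.
Proof. by case=> _ [[i [_ ?]] | [j [_ ?]]]. Qed.

Definition max_stable m n : config m n := ([ffun _ => n.-1], [ffun _ => m]).

Lemma stable_max_stable m n : 0 < n -> stable (max_stable m n).
Proof. by move=> n0; split=> i; rewrite ffunE // prednK. Qed.

Lemma ffun_le_eq_or_lt k (f g : {ffun 'I_k -> nat}) :
  (forall i, f i <= g i) -> f = g \/ exists i, f i < g i.
Proof.
move=> fg; case: (boolP [exists i, f i < g i]) => [/existsP|/existsPn lt_fg]; first by right.
by left; apply/ffunP => i; apply/eqP; rewrite eqn_leq fg leqNgt lt_fg.
Qed.

Lemma add_on1_le k (f g : {ffun 'I_k -> nat}) i :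
  (forall x, f x <= g x) -> f i < g i -> forall x, add_on f [set i] x <= g x.
Proof. by move=> fg lt_i x; rewrite ffunE inE; case: eqP => [->|_]; rewrite ?addn1 ?addn0. Qed.

Lemma sum_subn_add_on1 k (f g : {ffun 'I_k -> nat}) i : f i < g i ->
  \sum_x (g x - add_on f [set i] x) < \sum_x (g x - f x).
Proof.
move=> lt_i; rewrite (bigD1 i) // [X in _ < X](bigD1 i) //= ffunE inE eqxx.
rewrite (eq_bigr (fun x => g x - f x)) => [|x /negbTE xi]; last by rewrite ffunE inE xi addn0.
by rewrite ltn_add2r addn1 subnS prednK // subn_gt0.
Qed.

Definition config_le m n (x y : config m n) :=
  (forall i, x.1 i <= y.1 i) /\ (forall j, x.2 j <= y.2 j).

Lemma stable_le m n (x y : config m n) : config_le x y -> stable y -> stable x.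
Proof.
by case=> le1 le2 [s1 s2]; split=> v; [apply: leq_ltn_trans (s1 v) | apply: leq_ltn_trans (s2 v)].
Qed.

Lemma star_chain_step_le m n (x y : config m n) :
  stable y -> config_le x y -> star (@chain_step m n) x y.
Proof.
move=> sy; have [k] := ubnP (\sum_i (y.1 i - x.1 i) + \sum_j (y.2 j - x.2 j)).
elim: k x => // k IH x /ltnSE dk [le1 le2].
have sx := stable_le (conj le1 le2) sy.
have step x' : (exists i, x' = add_top x i) \/ (exists j, x' = add_bot x j) ->
    config_le x' y -> chain_step x x'.
  move=> [[i ->]|[j ->]] le'; split=> //; [left; exists i | right; exists j];
    by split; [apply: star_refl | apply: stable_le le' sy].
case: (ffun_le_eq_or_lt le1) => [e1 | [i lt_i]].
  case: (ffun_le_eq_or_lt le2) => [e2 | [j lt_j]].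
    case: x e1 e2 {dk le1 le2 sx step} => ? ? /= -> ->.
    by rewrite -surjective_pairing; apply: star_refl.
  have le' : config_le (add_bot x j) y by split=> //; apply: add_on1_le.
  apply: star_step (step _ _ le') (IH _ _ le'); first by right; exists j.
  by apply: leq_trans dk; rewrite ltn_add2l sum_subn_add_on1.
have le' : config_le (add_top x i) y by split=> //; apply: add_on1_le.
apply: star_step (step _ _ le') (IH _ _ le'); first by left; exists i.
by apply: leq_trans dk; rewrite ltn_add2r sum_subn_add_on1.
Qed.

Lemma star_chain_max_stable m n (c : config m n) :
  0 < n -> stable c -> star (@chain_step m n) c (max_stable m n).
Proof.
move=> n0 [s1 s2]; apply: star_chain_step_le (stable_max_stable m n0) _.
by split=> v; rewrite ffunE -ltnS ?prednK.
Qed.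

(** * Recurrent configurations are edge-dominated *)

Definition edge_dominated m n (c : config m n) :=
  forall (A : {set 'I_m}) (B : {set 'I_n}),
    #|A| * #|B| <= \sum_(i in A) c.1 i + \sum_(j in B) c.2 j.

Lemma edge_dominated_topple_top m n (c : config m n) i (S : {set 'I_n}) :
  n <= c.1 i -> edge_dominated c -> edge_dominated (sub_at c.1 i #|S|, add_on c.2 S).
Proof.
move=> ci dom A B /=; rewrite sum_add_on_set.
have Si : #|S| <= c.1 i := leq_trans (card_set_ord_le S) ci.
have := sum_sub_at (fun x => x \in A) Si; case iA: (i \in A) => /=; last first.
  by rewrite muln0 addn0 => ->; apply: leq_trans (dom A B) _; rewrite addnA leq_addr.
rewrite [X in _ = X](big_setD1 i iA) (cardsD1 i A) iA /= mulnDl mul1n.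
move: (dom (A :\ i) B) ci (card_set_ord_le B) (card_le_setI S B).
(* [set] identifies convertible copies of the same sums and cardinalities, which [lia]
   would otherwise treat as unrelated atoms. *)
set sA := \sum_(x in A) _; set sA' := \sum_(x in A :\ i) _; set sB := \sum_(x in B) _.
set a := #|A :\ i|; set b := #|B|; set s := #|S|; set bS := #|B :&: S|.
by lia.
Qed.

Lemma edge_dominated_topple_bot m n (c : config m n) j (S : {set 'I_m}) (b : bool) :
  m.+1 <= c.2 j -> edge_dominated c -> edge_dominated (add_on c.1 S, sub_at c.2 j (#|S| + b)).
Proof.
move=> cj dom A B /=; rewrite sum_add_on_set.
have Sj : #|S| + b <= c.2 j.
  by apply: leq_trans cj; rewrite -addn1 leq_add ?card_set_ord_le ?leq_b1.
have := sum_sub_at (fun x => x \in B) Sj; case jB: (j \in B) => /=; last first.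
  by rewrite muln0 addn0 => ->; apply: leq_trans (dom A B) _; rewrite leq_add2r leq_addr.
rewrite [X in _ = X](big_setD1 j jB) (cardsD1 j B) jB /= mulnDr muln1.
move: (dom A (B :\ j)) cj (card_set_ord_le A) (card_le_setI S A) (leq_b1 b).
set sB := \sum_(x in B) _; set sB' := \sum_(x in B :\ j) _; set sA := \sum_(x in A) _.
set a := #|A|; set b' := #|B :\ j|; set s := #|S|; set aS := #|A :&: S|.
by lia.
Qed.

Lemma edge_dominated_topple m n (c d : config m n) :
  topple c d -> edge_dominated c -> edge_dominated d.
Proof.
case=> {d} [c' i S | c' j S b].
- exact: edge_dominated_topple_top.
- exact: edge_dominated_topple_bot.
Qed.

Lemma edge_dominated_add_top m n (c : config m n) i :
  edge_dominated c -> edge_dominated (add_top c i).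
Proof.
move=> dom A B /=; rewrite sum_add_on_set.
by apply: leq_trans (dom A B) _; rewrite leq_add2r leq_addr.
Qed.

Lemma edge_dominated_add_bot m n (c : config m n) j :
  edge_dominated c -> edge_dominated (add_bot c j).
Proof.
move=> dom A B /=; rewrite sum_add_on_set.
by apply: leq_trans (dom A B) _; rewrite addnA leq_addr.
Qed.

Lemma edge_dominated_chain_step m n (c d : config m n) :
  chain_step c d -> edge_dominated c -> edge_dominated d.
Proof.
case=> _ [[i [cd _]] | [j [cd _]]] dom; apply: star_inv cd _.
- exact: edge_dominated_topple.
- exact: edge_dominated_add_top.
- exact: edge_dominated_topple.
- exact: edge_dominated_add_bot.
Qed.

Lemma edge_dominated_max_stable m n : edge_dominated (max_stable m n).
Proof.
move=> A B /=; under eq_bigr do rewrite ffunE; under [X in _ + X]eq_bigr do rewrite ffunE.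
rewrite !sum_nat_const.
move: (card_set_ord_le A) (card_set_ord_le B); set a := #|A|; set b := #|B|.
by nia.
Qed.

Lemma recurrent_edge_dominated m n (c : config m n) :
  0 < n -> stoch_recurrent c -> edge_dominated c.
Proof.
move=> n0 [sc back]; apply: star_inv (back _ (star_chain_max_stable n0 sc)) _.
  exact: edge_dominated_chain_step.
exact: edge_dominated_max_stable.
Qed.

(** * Dominance of Ferrers diagrams implies compatibility *)

Definition prefix_sum n (s : {ffun 'I_n -> nat}) t := \sum_(j < n | j < t) s j.

Definition dominated n (s s' : {ffun 'I_n -> nat}) :=
  forall t, t <= n -> prefix_sum s t <= prefix_sum s' t.

Lemma prefix_sum0 n (s : {ffun 'I_n -> nat}) : prefix_sum s 0 = 0.
Proof. exact: big_pred0. Qed.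

Lemma prefix_sumS n (s : {ffun 'I_n -> nat}) (j : 'I_n) :
  prefix_sum s j.+1 = prefix_sum s j + s j.
Proof.
rewrite /prefix_sum (bigD1 j) //= addnC; congr (_ + _); apply: eq_bigl => x.
by rewrite ltnS -val_eqE leq_eqVlt; case: ltngtP.
Qed.

Lemma prefix_sum_area n (s : {ffun 'I_n -> nat}) : prefix_sum s n = area s.
Proof. by apply: eq_bigl => j; rewrite ltn_ord. Qed.

Lemma prefix_sum_add_on1 n (s : {ffun 'I_n -> nat}) p t :
  prefix_sum (add_on s [set p]) t = prefix_sum s t + (p < t).
Proof.
rewrite /prefix_sum sum_add_on card_set_sum; congr (_ + _).
rewrite (bigD1 p) //= inE eqxx andbT big1 ?addn0 //.
by move=> j /negbTE jp; rewrite inE jp andbF.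
Qed.

Lemma prefix_sum_sub_at1 n (s : {ffun 'I_n -> nat}) p t : 0 < s p ->
  prefix_sum (sub_at s p 1) t + (p < t) = prefix_sum s t.
Proof. by move=> sp; rewrite /prefix_sum -(sum_sub_at (fun j : 'I_n => j < t) sp) mul1n. Qed.

Lemma prefix_sum_kvec m n (c : config m n) t : t <= n ->
  prefix_sum (kvec c) t + \sum_(i in [set i | c.1 i < t]) c.1 i = #|[set i | c.1 i < t]| * t.
Proof.
move=> tn; rewrite /prefix_sum.
rewrite (eq_bigr (fun j : 'I_n => \sum_(i < m) (c.1 i < j.+1 : nat))) => [|j _]; last first.
  by rewrite ffunE card_set_sum.
rewrite exchange_big /=.
under eq_bigr => i _ do rewrite sum_ord_lt_indicator //.
rewrite -sum_nat_const [RHS]big_mkcond [X in _ + X]big_mkcond -big_split /=.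
apply: eq_bigr => i _; rewrite inE; case: ltnP => [/ltnW ct|tc].
  by rewrite subnK.
by apply/eqP; rewrite addn0 subn_eq0.
Qed.

Lemma edge_dominated_dominated m n (c : config m n) :
  edge_dominated c -> dominated (kvec c) c.2.
Proof.
move=> dom t tn; have := dom [set i | c.1 i < t] [set j : 'I_n | j < t].
rewrite card_ord_lt // -(prefix_sum_kvec c tn).
have -> : \sum_(j in [set j : 'I_n | j < t]) c.2 j = prefix_sum c.2 t.
  by apply: eq_bigl => j; rewrite inE.
by rewrite addnC leq_add2l.
Qed.

Lemma prefix_sum_inj n (s s' : {ffun 'I_n -> nat}) :
  (forall t, t <= n -> prefix_sum s t = prefix_sum s' t) -> s = s'.
Proof.
move=> eq_pre; apply/ffunP => j; have := eq_pre j.+1 (ltn_ord j).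
by rewrite !prefix_sumS eq_pre 1?ltnW // => /addnI.
Qed.

Lemma dominance_block n (s s' : {ffun 'I_n -> nat}) :
  dominated s s' -> prefix_sum s n = prefix_sum s' n -> s != s' ->
  exists a b : 'I_n, [/\ a < b, s a < s' a, s' b < s b &
    forall t, a < t <= b -> prefix_sum s t < prefix_sum s' t].
Proof.
move=> dom eq_n neq.
pose P t := (t <= n) && (prefix_sum s t < prefix_sum s' t).
have [t0 Pt0] : exists t, P t.
  case: (boolP [exists t : 'I_n.+1, P t]) => [/existsP [t Pt] | /existsPn noP]; first by exists t.
  case/negP: neq; apply/eqP/prefix_sum_inj => t tn; apply/eqP; rewrite eqn_leq dom //=.
  by have := noP (Ordinal (tn : t < n.+1)); rewrite /P /= tn -leqNgt.
have [b /andP [bn lt_b] max_b] := ex_maxnP (ex_intro P t0 Pt0) (fun t (Pt : P t) => (andP Pt).1).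
have b_n : b < n by rewrite ltn_neqAle bn andbT; apply: contraTneq lt_b => ->; rewrite eq_n ltnn.
have eq_b1 : prefix_sum s b.+1 = prefix_sum s' b.+1.
  apply/eqP; rewrite eqn_leq dom //= leqNgt; apply/negP => lt_b1.
  by have := max_b b.+1; rewrite /P b_n lt_b1 ltnn => /(_ isT).
have b_gt0 : 0 < b by rewrite lt0n; apply: contraTneq lt_b => ->; rewrite !prefix_sum0.
pose Q t := (t < b) && (prefix_sum s t == prefix_sum s' t).
have Q0 : Q 0 by rewrite /Q b_gt0 !prefix_sum0.
have [a /andP [ab /eqP eq_a] max_a] :=
  ex_maxnP (ex_intro Q 0 Q0) (fun t (Qt : Q t) => ltnW (andP Qt).1).
have strict t : a < t <= b -> prefix_sum s t < prefix_sum s' t.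
  case/andP=> at_ tb; case: (ltngtP t b) tb => // [tb _|-> //].
  rewrite ltn_neqAle dom ?andbT; last exact: leq_trans (ltnW tb) bn.
  by apply/negP => eq_t; have := max_a t; rewrite /Q tb eq_t leqNgt at_ => /(_ isT).
have a_n : a < n := ltn_trans ab b_n.
exists (Ordinal a_n), (Ordinal b_n); split => //=.
  have := strict a.+1; rewrite ltnSn ab.
  by rewrite (prefix_sumS _ (Ordinal a_n)) (prefix_sumS s' (Ordinal a_n)) eq_a ltn_add2l => ->.
by move: eq_b1 lt_b; rewrite (prefix_sumS _ (Ordinal b_n)) (prefix_sumS s' (Ordinal b_n)) /=; lia.
Qed.

Definition shift_cell n (s : {ffun 'I_n -> nat}) (p p' : 'I_n) := add_on (sub_at s p 1) [set p'].

Lemma shift_cellE n (s : {ffun 'I_n -> nat}) (p p' : 'I_n) j : p != p' ->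
  shift_cell s p p' j = if j == p then s p - 1 else if j == p' then s p' + 1 else s j.
Proof.
move=> pp'; rewrite !ffunE !inE; case: (eqVneq j p) => [->|_]; first by rewrite (negbTE pp') addn0.
by case: (eqVneq j p') => [->|_]; rewrite ?addn0.
Qed.

Lemma prefix_sum_shift_cell n (s : {ffun 'I_n -> nat}) p p' t : 0 < s p ->
  prefix_sum (shift_cell s p p') t + (p < t) = prefix_sum s t + (p' < t).
Proof. by move=> sp; rewrite prefix_sum_add_on1 addnAC prefix_sum_sub_at1. Qed.

Lemma ferrers_shift_cell n (s : {ffun 'I_n -> nat}) (p p' : 'I_n) :
  ferrers s -> p' < p -> s p' + 2 <= s p ->
  (forall j : 'I_n, p' < j -> s p' < s j) -> (forall i : 'I_n, i < p -> s i < s p) ->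
  ferrers (shift_cell s p p').
Proof.
move=> fs p'p gap above_p' below_p i j ij; rewrite !ffunE !inE.
have pp' : (p == p') = false by apply/negbTE; rewrite -val_eqE /= gtn_eqF.
have sij := fs i j ij.
case: (eqVneq j p) ij sij => [->|jp] ij sij /=.
  case: (eqVneq i p) => [->|ip]; rewrite ?pp' ?addn0 //.
  have ip_lt : i < p by rewrite ltn_neqAle ij andbT.
  by case: (eqVneq i p') => [->|_] /=; [move: gap | move: (below_p i ip_lt)]; lia.
case: (eqVneq i p) => [ei|ip] /=; first by move: sij; rewrite ei pp'; lia.
case: (eqVneq i p') => [ei|_] /=; last by rewrite addn0 (leq_trans sij) ?leq_addr.
case: (eqVneq j p') => [->|jp'] /=; first by rewrite ei.
rewrite addn0 addn1 ei; apply: above_p'; rewrite ltn_neqAle -ei ij andbT.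
by apply: contra_neq jp' => /val_inj <-.
Qed.

Lemma prefix_sum_shift_cellE n (s : {ffun 'I_n -> nat}) (p p' : 'I_n) t : p' < p -> 0 < s p ->
  prefix_sum (shift_cell s p p') t = prefix_sum s t + ((p' < t) && (t <= p)).
Proof.
move=> p'p sp; have := prefix_sum_shift_cell p' t sp.
by case: (ltnP p t) => pt; case: (ltnP p' t) => p't /=; lia.
Qed.

Definition dominance_defect n (s s' : {ffun 'I_n -> nat}) :=
  \sum_(t < n.+1) (prefix_sum s' t - prefix_sum s t).

Lemma dominance_defect_lt n (s s1 s' : {ffun 'I_n -> nat}) t0 : t0 <= n ->
  (forall t, prefix_sum s t <= prefix_sum s1 t) -> prefix_sum s t0 < prefix_sum s1 t0 ->
  prefix_sum s1 t0 <= prefix_sum s' t0 -> dominance_defect s1 s' < dominance_defect s s'.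
Proof.
move=> t0n le_s1 lt_t0 le_t0; rewrite /dominance_defect (bigD1 (Ordinal (t0n : t0 < n.+1))) //=.
rewrite [X in _ < X](bigD1 (Ordinal (t0n : t0 < n.+1))) //= -addSn leq_add //.
  by move: lt_t0 le_t0; lia.
by apply: leq_sum => t _; rewrite leq_sub2l.
Qed.

Lemma add_top_row_step n (s s' : {ffun 'I_n -> nat}) (top : 'I_n) : top.+1 = n ->
  ferrers s -> dominated s s' -> prefix_sum s n < prefix_sum s' n ->
  [/\ legal_op s (Add top) (add_on s [set top]), dominated (add_on s [set top]) s'
    & dominance_defect (add_on s [set top]) s' < dominance_defect s s'].
Proof.
move=> topn fs dom lt_n; have pre_n t : t <= n -> (top < t) = (t == n).
  by move=> tn; rewrite eqn_leq tn -[n in RHS]topn.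
split.
- apply: legal_add => i j ij; rewrite !ffunE !inE; case: (eqVneq j top) => [->|jtop].
    by rewrite leq_add ?fs ?leq_b1 // -ltnS topn.
  have jt : j < top by rewrite ltn_neqAle -ltnS topn ltn_ord andbT.
  by rewrite -val_eqE (ltn_eqF (leq_ltn_trans ij jt)) !addn0 fs.
- move=> t tn; rewrite prefix_sum_add_on1 pre_n //.
  by case: eqP => [->|_]; rewrite ?addn0 ?addn1 ?dom.
- apply: (@dominance_defect_lt _ _ _ _ n) => // [t||]; rewrite prefix_sum_add_on1 ?leq_addr //.
  all: by rewrite -[X in top < X]topn ltnSn addn1.
Qed.

Lemma shift_cell_step n (s s' : {ffun 'I_n -> nat}) (p p' : 'I_n) :
  p' < p -> 0 < s p -> dominated s s' ->
  (forall t, p' < t <= p -> prefix_sum s t < prefix_sum s' t) ->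
  dominated (shift_cell s p p') s' /\
  dominance_defect (shift_cell s p p') s' < dominance_defect s s'.
Proof.
move=> p'p sp dom strict; split.
  move=> t tn; rewrite prefix_sum_shift_cellE //.
  by case: andP => [/andP/strict|_]; rewrite ?addn1 ?addn0 ?dom.
have le_p'p : p' < p'.+1 <= p by rewrite ltnSn.
apply: (@dominance_defect_lt _ _ _ _ p'.+1) => [|t||]; rewrite ?prefix_sum_shift_cellE ?le_p'p //.
- by rewrite leq_addr.
- by rewrite addn1 ltnSn.
- by rewrite addn1; apply: strict.
Qed.

Lemma shift_step n (s s' : {ffun 'I_n -> nat}) :
  ferrers s -> ferrers s' -> dominated s s' -> prefix_sum s n = prefix_sum s' n -> s != s' ->
  exists p p' : 'I_n, [/\ legal_op s (Shift p p') (shift_cell s p p'),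
    dominated (shift_cell s p p') s'
    & dominance_defect (shift_cell s p p') s' < dominance_defect s s'].
Proof.
move=> fs fs' dom eq_n neq.
have [a [b [ab sa sb strict]]] := dominance_block dom eq_n neq.
have gap_ab : s a + 2 <= s b by move: (fs' a b (ltnW ab)) sa sb; lia.
(* The cell moves from the first row as long as row b to the last row as short as row a. *)
case: (@arg_maxnP _ a (fun x => s x <= s a) val (leqnn _)) => p' sp'a max_p'.
case: (@arg_minnP _ b (fun x => s b <= s x) val (leqnn _)) => p sbp min_p.
have above_p' (j : 'I_n) : p' < j -> s p' < s j.
  move=> p'j; rewrite (leq_ltn_trans sp'a) // ltnNge.
  by apply: contraTN p'j => /max_p'; rewrite -leqNgt.
have below_p (i : 'I_n) : i < p -> s i < s p.
  move=> ip; rewrite (leq_trans _ sbp) // ltnNge.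
  by apply: contraTN ip => /min_p; rewrite -leqNgt.
have gap : s p' + 2 <= s p by move: sp'a sbp gap_ab; lia.
have p'p : p' < p by rewrite ltnNge; apply: contraTN gap => /fs; lia.
have sp : 0 < s p by move: gap; lia.
have [dom1 defect1] : dominated (shift_cell s p p') s' /\
    dominance_defect (shift_cell s p p') s' < dominance_defect s s'.
  apply: shift_cell_step => // t /andP [p't tp]; apply: strict.
  by rewrite (leq_ltn_trans (max_p' a _) p't) ?(leq_trans tp (min_p b _)).
exists p, p'; split=> //; apply: legal_shift => //.
exact: ferrers_shift_cell.
Qed.

Lemma legal_op_ferrers n (s s1 : {ffun 'I_n -> nat}) o : legal_op s o s1 -> ferrers s1.
Proof. by case. Qed.

Lemma dominated_compatible n (s s' : {ffun 'I_n -> nat}) : 0 < n ->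
  ferrers s -> ferrers s' -> dominated s s' -> compatible s s'.
Proof.
move=> n0 + fs'; have [k] := ubnP (dominance_defect s s').
elim: k s => // k IH s /ltnSE defk fs dom.
have step o s1 : legal_op s o s1 -> dominated s1 s' ->
    dominance_defect s1 s' < dominance_defect s s' -> compatible s s'.
  move=> leg dom1 def1; have [os ops] := IH s1 (leq_trans def1 defk) (legal_op_ferrers leg) dom1.
  by exists (o :: os); apply: op_seq_cons leg ops.
case: (eqVneq s s') => [->|neq]; first by exists [::]; apply: op_seq_nil.
have top_lt : n.-1 < n by rewrite ltn_predL.
case: (ltnP (prefix_sum s n) (prefix_sum s' n)) => [lt_n|ge_n].
  by have [] := add_top_row_step (top := Ordinal top_lt) (prednK n0) fs dom lt_n; apply: step.
have eq_n : prefix_sum s n = prefix_sum s' n by apply/eqP; rewrite eqn_leq ge_n dom.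
by have [p [p' []]] := shift_step fs fs' dom eq_n neq; apply: step.
Qed.

(** * Firing witnesses *)

(* T j is the set of top vertices that receive a grain when bottom vertex j topples. *)
Definition firing_witness m n (c1 : {ffun 'I_m -> nat}) (s : {ffun 'I_n -> nat}) :=
  exists T : 'I_n -> {set 'I_m},
    (forall j : 'I_n, m - s j <= #|T j|) /\
    (forall i : 'I_m, \sum_(j < n) (i \in T j : nat) <= c1 i).

Lemma firing_witness_kvec m n (c : config m n) : firing_witness c.1 (kvec c).
Proof.
exists (fun j => [set i | j < c.1 i]); split=> [j|i].
  rewrite ffunE -[X in X - _](card_ord m) -(cardsC [set i | c.1 i < j.+1]) addKn.
  by apply/eq_leq/eq_card => i; rewrite !inE ltnS -ltnNge.
rewrite (eq_bigr (fun j : 'I_n => ((j < c.1 i) && (0 <= j) : nat))) => [|j _].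
  by rewrite sum_ord_interval subn0 geq_minl.
by rewrite inE andbT.
Qed.

Definition transfer m n (T : 'I_n -> {set 'I_m}) (p p' : 'I_n) i : 'I_n -> {set 'I_m} :=
  fun j => if j == p then i |: T p else if j == p' then T p' :\ i else T j.

Lemma sum_mem_transfer m n (T : 'I_n -> {set 'I_m}) (p p' : 'I_n) i x : p != p' ->
  i \in T p' -> i \notin T p ->
  \sum_j (x \in transfer T p p' i j : nat) = \sum_j (x \in T j : nat).
Proof.
rewrite /transfer => pp' ip' ip; case: (eqVneq x i) => [->|xi].
  rewrite [RHS](reindex_inj (@perm_inj _ (tperm p p'))) /=; apply: eq_bigr => j _.
  case: (eqVneq j p) => [->|jp]; first by rewrite tpermL setU11 ip'.
  case: (eqVneq j p') => [->|jp']; first by rewrite tpermR setD11 (negbTE ip).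
  by rewrite tpermD // eq_sym.
apply: eq_bigr => j _; case: eqVneq => [->|_]; last case: eqVneq => [->|_].
all: by rewrite ?in_setU1 ?in_setD1 ?(negbTE xi) /=.
Qed.

Lemma firing_witness_shift_cell m n (c1 : {ffun 'I_m -> nat}) (s : {ffun 'I_n -> nat})
    (p p' : 'I_n) :
  p' < p -> 0 < s p -> ferrers (shift_cell s p p') ->
  firing_witness c1 s -> firing_witness c1 (shift_cell s p p').
Proof.
move=> p'p sp fs1 [T [colT rowT]].
have pp' : p != p' by rewrite -val_eqE /= gtn_eqF.
have gap : s p' + 2 <= s p.
  by move: (fs1 p' p (ltnW p'p)); rewrite !shift_cellE // eq_sym (negbTE pp') !eqxx; lia.
case: (leqP (m - (s p - 1)) #|T p|) => colp.
  exists T; split=> // j; rewrite shift_cellE //; case: (eqVneq j p) => [->//|_].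
  by case: (eqVneq j p') => [->|_]; rewrite ?(leq_trans _ (colT p')) ?leq_sub2l ?leq_addr.
have [i /setDP [ip' ip]] : exists i, i \in T p' :\: T p.
  apply/set0Pn; rewrite setD_eq0; apply: contraTN colp => /subset_leq_card Tp'p.
  by move: (colT p') (colT p) Tp'p gap; set a := #|T p|; set b := #|T p'|; lia.
exists (transfer T p p' i); split=> [j|x]; last by rewrite sum_mem_transfer.
rewrite shift_cellE /transfer //; case: (eqVneq j p) => [_|_].
  by rewrite cardsU1 ip; move: (colT p); set a := #|T p|; lia.
case: (eqVneq j p') => [_|_]; last exact: colT.
move: (colT p') (cardsD1 i (T p')); rewrite ip'.
by set b := #|T p'|; set b' := #|T p' :\ i|; lia.
Qed.

Lemma firing_witness_legal_op m n (c1 : {ffun 'I_m -> nat}) (s s1 : {ffun 'I_n -> nat}) o :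
  legal_op s o s1 -> firing_witness c1 s -> firing_witness c1 s1.
Proof.
case=> {o s1} [s0 p p' p'p sp fs1 | s0 p _]; first exact: firing_witness_shift_cell.
case=> T [colT rowT]; exists T; split=> // j.
by apply: leq_trans (colT j); rewrite ffunE leq_sub2l ?leq_addr.
Qed.

Lemma firing_witness_op_seq m n (c1 : {ffun 'I_m -> nat}) (s s1 : {ffun 'I_n -> nat}) os :
  op_seq s os s1 -> firing_witness c1 s -> firing_witness c1 s1.
Proof. by elim=> // x o y os' z /firing_witness_legal_op step _ IH /step. Qed.

(** * Recurrence from a firing witness *)

Lemma star_topple_to_sink m n (t : {ffun 'I_m -> nat}) (X : {set 'I_n}) :
  star (@topple m n) (t, [ffun j => m + (j \in X)]) (t, [ffun _ => m]).
Proof.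
have [k] := ubnP #|X|; elim: k X => // k IH X /ltnSE Xk.
have [->|[j jX]] := set_0Vmem X.
  rewrite (_ : [ffun j => _] = [ffun _ => m]); first exact: star_refl.
  by apply/ffunP => j; rewrite !ffunE inE addn0.
apply: star_step (IH (X :\ j) _); last by apply: leq_trans Xk; rewrite (cardsD1 j X) jX.
have -> : (t, [ffun j' => m + (j' \in X :\ j)]) =
          (add_on t set0, sub_at [ffun j' => m + (j' \in X)] j (#|set0 : {set 'I_m}| + true)).
  congr pair; apply/ffunP => x; rewrite !ffunE ?inE ?addn0 //.
  by case: (eqVneq x j) => [->|_]; rewrite ?jX ?cards0 ?add0n ?addnK ?addn0.
by apply: topple_bot; rewrite ffunE jX addn1.
Qed.

Definition cleared m n (X : {set 'I_m}) : config m n :=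
  ([ffun i => if i \in X then 0 else n.-1], [ffun _ => m]).
Arguments cleared : clear implicits.

Lemma stable_cleared m n X : 0 < n -> stable (cleared m n X).
Proof. by move=> n0; split=> i; rewrite ffunE //; case: (i \in X); rewrite // prednK. Qed.

Lemma chain_step_clear m n (X : {set 'I_m}) i : 0 < n -> i \notin X ->
  chain_step (cleared m n X) (cleared m n (i |: X)).
Proof.
(* A grain on bottom vertex j0 makes it topple onto i alone; then the full vertex i topples
   onto every bottom vertex, and the bottom vertices other than j0 return their extra grain
   to the sink. *)
move=> n0 iX; split; first exact: stable_cleared.
right; exists (Ordinal n0); split; last exact: stable_cleared.
set j0 := Ordinal n0.
apply: star_step.
  by apply: (@topple_bot _ _ _ j0 [set i] true); rewrite /= !ffunE inE eqxx addn1.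
apply: star_step.
  by apply: (@topple_top _ _ _ i setT); rewrite /= !ffunE inE eqxx (negbTE iX) addn1 prednK.
set c := (X in star _ X _).
have -> : c = ((cleared m n (i |: X)).1, [ffun j => m + (j \in [set~ j0])]).
  congr pair; apply/ffunP => x; rewrite !ffunE !inE.
    case: (eqVneq x i) => [->|_] /=; last by rewrite addn0.
    by rewrite (negbTE iX) cardsT card_ord addn1 prednK // subnn.
  have m0 : 0 < m by apply: leq_ltn_trans (ltn_ord i).
  by case: (eqVneq x j0) => [_|_] /=; rewrite ?cards1 ?addn0 ?addn1 //; move: m0; lia.
exact: star_topple_to_sink.
Qed.

Lemma star_chain_clear m n (X : {set 'I_m}) : 0 < n ->
  star (@chain_step m n) (max_stable m n) (cleared m n X).
Proof.
move=> n0; have [k] := ubnP #|X|; elim: k X => // k IH X /ltnSE Xk.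
have [->|[i iX]] := set_0Vmem X.
  rewrite (_ : cleared m n set0 = max_stable m n); first exact: star_refl.
  by congr pair; apply/ffunP => i; rewrite !ffunE inE.
rewrite -(setD1K iX); apply: star_trans (IH (X :\ i) _) _.
  by apply: leq_trans Xk; rewrite (cardsD1 i X) iX.
by apply: star_step (chain_step_clear _ _) (star_refl _ _); rewrite ?setD11.
Qed.

Definition fired m n (T : 'I_n -> {set 'I_m}) q : config m n :=
  ([ffun i => \sum_(j < n) ((j < q) && (i \in T j) : nat)],
   [ffun j : 'I_n => if j < q then m - #|T j| else m]).
Arguments fired : clear implicits.

Lemma stable_fired m n (T : 'I_n -> {set 'I_m}) q :
  (forall i, \sum_(j < n) (i \in T j : nat) < n) -> stable (fired m n T q).
Proof.
move=> rowT; split=> [i|j]; rewrite ffunE; last by case: ifP; rewrite ltnS ?leq_subr.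
by apply: leq_ltn_trans (rowT i); apply: leq_sum => j _; case: (j < q); case: (i \in T j).
Qed.

Lemma chain_step_fire m n (T : 'I_n -> {set 'I_m}) (q : 'I_n) :
  (forall i, \sum_(j < n) (i \in T j : nat) < n) ->
  chain_step (fired m n T q) (fired m n T q.+1).
Proof.
move=> rowT; split; first exact: stable_fired.
right; exists q; split; last exact: stable_fired.
apply: star_step (star_refl _ _).
have -> : fired m n T q.+1 =
    (add_on (add_bot (fired m n T q) q).1 (T q),
     sub_at (add_bot (fired m n T q) q).2 q (#|T q| + true)).
  congr pair; apply/ffunP => x; rewrite !ffunE ?sum_ord_ltS //.
  rewrite !inE; case: (eqVneq x q) => [->|xq] /=; first by rewrite ltnn ltnSn !addn1 subSS.
  by rewrite addn0 ltnS leq_eqVlt; case: (@eqP nat x q) xq => // /val_inj ->; rewrite eqxx.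
by apply: topple_bot; rewrite /= !ffunE ltnn inE eqxx addn1.
Qed.

Lemma star_chain_fire m n (T : 'I_n -> {set 'I_m}) q : q <= n ->
  (forall i, \sum_(j < n) (i \in T j : nat) < n) ->
  star (@chain_step m n) (fired m n T 0) (fired m n T q).
Proof.
move=> + rowT; elim: q => [|q IH] qn; first exact: star_refl.
apply: star_trans (IH (ltnW qn)) _.
exact: star_step (chain_step_fire (Ordinal qn) rowT) (star_refl _ _).
Qed.

Lemma firing_witness_recurrent m n (c : config m n) :
  0 < n -> stable c -> firing_witness c.1 c.2 -> stoch_recurrent c.
Proof.
move=> n0 sc [T [colT rowT]]; split=> // c' cc'.
have sc' : stable c' by apply: star_inv cc' sc => a b /stable_chain_step.
have rowT' i : \sum_(j < n) (i \in T j : nat) < n := leq_ltn_trans (rowT i) (sc.1 i).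
apply: star_trans (star_chain_max_stable n0 sc') _.
apply: star_trans (star_chain_clear setT n0) _.
rewrite (_ : cleared m n setT = fired m n T 0); last first.
  by congr pair; apply/ffunP => i; rewrite !ffunE ?inE // big1.
apply: star_trans (star_chain_fire (leqnn n) rowT') _.
apply: star_chain_step_le => //; split=> [i|j]; rewrite ffunE.
  by apply: leq_trans (rowT i); apply/eq_leq/eq_bigr => j _; rewrite ltn_ord.
by rewrite ltn_ord leq_subCl.
Qed.

(** * The map Psi *)

Lemma ferrers_card_leq k (f : {ffun 'I_k -> nat}) y (x : 'I_k) :
  ferrers f -> (#|[set x' | f x' <= y]| <= x) = (y < f x).
Proof.
move=> ff; apply/idP/idP => [|lt_y]; last first.
  rewrite -[X in _ <= X](card_ord_lt (ltnW (ltn_ord x))); apply: subset_leq_card.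
  apply/subsetP => x'; rewrite !inE ltnNge; apply: contraTN => /ff xx'.
  by rewrite -ltnNge (leq_trans lt_y).
apply: contraLR; rewrite -!ltnNge ltnS => le_y.
rewrite -[X in X <= _](card_ord_lt (ltn_ord x)); apply: subset_leq_card.
by apply/subsetP => x'; rewrite !inE ltnS => /ff/leq_trans->.
Qed.

Lemma kvec_ferrers m n (c : config m n) : ferrers (kvec c).
Proof.
move=> j j' jj'; rewrite !ffunE; apply/subset_leq_card/subsetP => i.
by rewrite !inE => /leq_trans; apply; rewrite ltnS.
Qed.

Lemma kvecE m n (c : config m n) j : kvec c j = #|[set i | c.1 i <= j]|.
Proof. by rewrite ffunE; apply: eq_card => i; rewrite !inE ltnS. Qed.

Lemma kvec_leq m n (c : config m n) (i : 'I_m) (j : 'I_n) :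
  ferrers c.1 -> (kvec c j <= i) = (j < c.1 i).
Proof. by move=> fc; rewrite kvecE ferrers_card_leq. Qed.

Lemma ncols_ferrers n (s : {ffun 'I_n -> nat}) (top : 'I_n) :
  top.+1 = n -> ferrers s -> ncols s = s top.
Proof.
move=> topn fs; apply/eqP; rewrite eqn_leq leq_bigmax andbT.
by apply/bigmax_leqP => j _; apply: fs; rewrite -ltnS topn.
Qed.

Lemma ncols_kvec m n (c : config m n) : 0 < n -> stable c -> ncols (kvec c) = m.
Proof.
move=> n0 [s1 _]; have top_lt : n.-1 < n by rewrite ltn_predL.
rewrite (ncols_ferrers (top := Ordinal top_lt) (prednK n0) (kvec_ferrers c)).
by rewrite ffunE prednK // -[RHS](card_ord m); apply: eq_card => i; rewrite inE s1.
Qed.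

Definition conj_tops m n (F : {ffun 'I_n -> nat}) : {ffun 'I_m -> nat} :=
  [ffun i : 'I_m => #|[set j | F j <= i]|].

Lemma conj_tops_ferrers m n (F : {ffun 'I_n -> nat}) : ferrers (conj_tops m F).
Proof.
move=> i i' ii'; rewrite !ffunE; apply/subset_leq_card/subsetP => j.
by rewrite !inE => /leq_trans; apply.
Qed.

Lemma kvec_conj_tops m n (F s : {ffun 'I_n -> nat}) :
  ferrers F -> (forall j, F j <= m) -> kvec (conj_tops m F, s) = F.
Proof.
move=> fF Fm; apply/ffunP => j; rewrite kvecE -[RHS](card_ord_lt (Fm j)).
by apply: eq_card => i; rewrite !inE ffunE ferrers_card_leq.
Qed.

Lemma conj_tops_lt m n (F : {ffun 'I_n -> nat}) (top : 'I_n) (i : 'I_m) :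
  top.+1 = n -> ferrers F -> F top = m -> conj_tops m F i < n.
Proof.
move=> topn fF Ftop; rewrite -[X in _ < X]topn ltnS ffunE ferrers_card_leq // Ftop.
exact: ltn_ord.
Qed.

Lemma area_legal_op n (s s1 : {ffun 'I_n -> nat}) o :
  legal_op s o s1 -> area s1 = area s + is_add o.
Proof.
case=> {o s1} [s0 p p' _ sp _ | s0 p _] /=; rewrite -!prefix_sum_area.
  by apply/eqP; rewrite addn0 -(eqn_add2r (p < n)) (prefix_sum_shift_cell p' n sp) !ltn_ord.
by rewrite prefix_sum_add_on1 ltn_ord.
Qed.

Lemma area_op_seq n (s s1 : {ffun 'I_n -> nat}) os :
  op_seq s os s1 -> area s1 = area s + count (@is_add n) os.
Proof. by elim=> [x|x o y os' z /area_legal_op -> _ ->] /=; rewrite ?addn0 ?addnA. Qed.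

Lemma area_kvec m n (c : config m n) :
  stable c -> area (kvec c) + \sum_(i < m) c.1 i = m * n.
Proof.
move=> [s1 _]; have := prefix_sum_kvec c (leqnn n).
have -> : [set i | c.1 i < n] = setT by apply/setP => i; rewrite !inE s1.
by rewrite prefix_sum_area cardsT card_ord (eq_bigl _ _ (fun i => in_setT i)).
Qed.

Lemma Psi_compatible_target m n (c : config m n) :
  0 < n -> sorted_config c -> stoch_recurrent c -> compatible_target m (Psi c).
Proof.
move=> n0 [_ fc2] rc; have [[_ s2] _] := rc; split=> /=.
- exact: kvec_ferrers.
- by apply: ncols_kvec rc.1.
- exact: fc2.
- by apply/bigmax_leqP => j _; rewrite -ltnS s2.
- apply: (dominated_compatible n0 (kvec_ferrers c) fc2).
  exact: edge_dominated_dominated (recurrent_edge_dominated n0 rc).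
Qed.

Lemma Psi_injective m n (c1 c2 : config m n) :
  sorted_config c1 -> stable c1 -> sorted_config c2 -> stable c2 -> Psi c1 = Psi c2 -> c1 = c2.
Proof.
move=> [f1 _] [s1 _] [f2 _] [s2 _] [ek e2].
have e1 : c1.1 = c2.1.
  apply/ffunP => i; rewrite -[LHS](card_ord_lt (ltnW (s1 i))) -[RHS](card_ord_lt (ltnW (s2 i))).
  by apply: eq_card => j; rewrite !inE -!kvec_leq // ek.
by rewrite [c1]surjective_pairing [c2]surjective_pairing e1 e2.
Qed.

Lemma Psi_surjective m n (P : {ffun 'I_n -> nat} * {ffun 'I_n -> nat}) : 0 < n ->
  compatible_target m P ->
  exists c : config m n, [/\ sorted_config c, stoch_recurrent c & Psi c = P].
Proof.
case: P => F F' n0 [/= fF nF fF' nF' [os ops]].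
have top_lt : n.-1 < n by rewrite ltn_predL.
have Ftop : F (Ordinal top_lt) = m.
  by rewrite -nF (ncols_ferrers (top := Ordinal top_lt) (prednK n0) fF).
have Fm j : F j <= m by rewrite -nF leq_bigmax.
pose c : config m n := (conj_tops m F, F').
have ekF : kvec c = F := kvec_conj_tops F' fF Fm.
exists c; split; last by rewrite /Psi ekF.
  by split; [apply: conj_tops_ferrers | apply: fF'].
apply: (firing_witness_recurrent n0).
  split=> [i|j] /=; first exact: (conj_tops_lt (top := Ordinal top_lt) _ (prednK n0) fF Ftop).
  by rewrite ltnS (leq_trans _ nF') ?leq_bigmax.
by apply: firing_witness_op_seq ops _; rewrite -ekF; apply: firing_witness_kvec.
Qed.

Local Open Scope ring_scope.

Lemma level_kvec m n (c : config m n) :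
  stable c -> level c = (area c.2)%:Z - (area (kvec c))%:Z.
Proof. by move=> sc; rewrite /level -(area_kvec sc) /area !PoszD; lia. Qed.

Lemma level_count_add m n (c : config m n) os :
  stable c -> op_seq (kvec c) os c.2 -> level c = (count (@is_add n) os)%:Z.
Proof. by move=> sc ops; rewrite level_kvec // (area_op_seq ops) PoszD addrAC subrr add0r. Qed.

Theorem theorem3p2 (m n : nat) : (1 <= n)%N ->
  (* Psi maps sorted recurrent configurations to compatible pairs *)
  (forall c : config m n, sorted_config c -> stoch_recurrent c ->
     compatible_target m (Psi c)) /\
  (* injective on them *)
  (forall c1 c2 : config m n,
     sorted_config c1 -> stoch_recurrent c1 ->
     sorted_config c2 -> stoch_recurrent c2 ->
     Psi c1 = Psi c2 -> c1 = c2) /\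
  (* surjective onto compatible pairs *)
  (forall P : {ffun 'I_n -> nat} * {ffun 'I_n -> nat},
     compatible_target m P ->
     exists c : config m n, [/\ sorted_config c, stoch_recurrent c & Psi c = P]) /\
  (* level formula and number of Add operations *)
  (forall c : config m n, sorted_config c -> stoch_recurrent c ->
     level c = (area c.2)%:Z - (area (kvec c))%:Z /\
     forall os, op_seq (kvec c) os c.2 -> level c = (count (@is_add n) os)%:Z).
Proof.
move=> n0; split; [|split; [|split]].
- by move=> c sc rc; apply: Psi_compatible_target.
- by move=> c1 c2 sc1 [st1 _] sc2 [st2 _]; apply: Psi_injective.
- by move=> P; apply: Psi_surjective.
- by move=> c sc [st _]; split=> [|os]; [apply: level_kvec | apply: level_count_add].
Qed.
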